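(* Let $\mathcal{D}$ be the class of all finite digraphs and let $D\in\mathcal{D}$. The class $\mathrm{Av}(D)=\{E\in\mathcal{D}: D\not\preceq E\}$, with respect to the strong homomorphic image ordering $\preceq$, is well quasi-ordered if and only if $D$ is isomorphic to the complete digraph $\overrightarrow{K}_n$ for some $n\ge1$.
   Context: A digraph is a set $D$ with a binary relation $E(D)\subseteq D\times D$ (loops allowed). $\overrightarrow{K}_n$ is the digraph on $\{1,\dots,n\}$ with edge set $\{(i,j):1\le i,j\le n\}$ (all ordered pairs, including loops). A homomorphism maps edges to edges; it is strong if additionally every edge of the target between vertices of the image is the image of an edge. Strong homomorphic image ordering: $A\preceq B$ iff there is a surjective strong homomorphism $B\to A$. Well quasi-ordered means no infinite strictly decreasing sequence and no infinite antichain; digraphs considered up to isomorphism. *)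

From mathcomp Require Import all_boot.
Set Implicit Arguments. Unset Strict Implicit. Unset Printing Implicit Defensive.

(* A finite digraph: vertex set {0,..,n-1} (any finite set up to relabelling),
   edge relation E (loops allowed). *)
Record digraph := Digraph { dg_n : nat; dg_E : rel 'I_dg_n }.

Definition vert (D : digraph) := 'I_(dg_n D).

Definition is_hom (B A : digraph) (f : vert B -> vert A) : Prop :=
  forall x y, dg_E x y -> dg_E (f x) (f y).

Definition is_strong_hom (B A : digraph) (f : vert B -> vert A) : Prop :=
  is_hom f /\
  forall x y : vert B, dg_E (f x) (f y) ->
    exists x' y' : vert B, [/\ f x' = f x, f y' = f y & dg_E x' y'].

Definition shi_le (A B : digraph) : Prop :=
  exists f : vert B -> vert A,
    is_strong_hom f /\ (forall a : vert A, exists b : vert B, f b = a).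

Definition dg_iso (A B : digraph) : Prop :=
  exists f : vert A -> vert B, bijective f /\
    forall x y, dg_E x y = dg_E (f x) (f y).

Definition complete_digraph (n : nat) : digraph := @Digraph n (fun _ _ => true).

Definition Av (D : digraph) : digraph -> Prop := fun E => ~ shi_le D E.

Definition wqo_class (C : digraph -> Prop) : Prop :=
  (~ exists s : nat -> digraph, (forall i, C (s i)) /\
       forall i, shi_le (s i.+1) (s i) /\ ~ shi_le (s i) (s i.+1)) /\
  (~ exists s : nat -> digraph, (forall i, C (s i)) /\
       forall i j, i <> j -> ~ shi_le (s i) (s j)).

From mathcomp Require Import all_boot zify.
From Stdlib Require Import Classical Wf_nat.
Set Implicit Arguments. Unset Strict Implicit. Unset Printing Implicit Defensive.

(* If D is not a nonempty complete digraph, complements of directed paths form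
   an infinite antichain in Av(D): a surjective homomorphism between two of
   them must pull each non-edge (x, x+1) back to a non-edge, which forces it
   to be injective.  Loops are kept when D is empty or has a loopless vertex,
   and dropped when D is reflexive.

   Conversely let D = K_d.  Strong images have at most as many vertices, and
   an equal-size one is an isomorphism, so there is no infinite descending
   chain.  A matching with d^2 edges has K_d as a strong image, so every E in
   Av(K_d) has a set C of fewer than 2d^2 vertices covering all its non-loop
   edges.  Such an E is determined by the digraph induced on C and by the
   number of vertices outside C of each type (loop bit, in- and out-neighbours
   in C).  By Dickson's lemma any sequence in Av(K_d) has i < j with the same
   data on C, the same types present, and at least as many vertices of each
   type in E_j; collapsing the surplus vertices of E_j onto E_i is then a
   surjective strong homomorphism. *)

Lemma surj_section (A B : finType) (f : B -> A) :
  (forall a, exists b, f b = a) -> exists g : A -> B, cancel g f.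
Proof.
move=> f_surj; have ex_pre a : exists b, f b == a.
  by have [b <-] := f_surj a; exists b.
by exists (fun a => xchoose (ex_pre a)) => a; apply/eqP/(xchooseP (ex_pre a)).
Qed.

Lemma shi_le_card (A B : digraph) : shi_le A B -> dg_n A <= dg_n B.
Proof.
move=> [f [_ /surj_section[g /can_inj g_inj]]].
by have := leq_card g g_inj; rewrite !card_ord.
Qed.

Lemma shi_le_eq_card_sym (A B : digraph) :
  shi_le A B -> dg_n A = dg_n B -> shi_le B A.
Proof.
move=> [f [[f_hom f_strong] /surj_section[g gK]]] eq_n.
have g_bij : bijective g.
  by apply: inj_card_bij (can_inj gK) _; rewrite !card_ord eq_n.
have fK : cancel f g by apply/(bij_can_sym g_bij).
exists g; split; last by move=> b; exists (f b).
split=> [x y Exy | x y Egxy].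
- have /f_strong[x' [y' [fx' fy' Exy']]] : dg_E (f (g x)) (f (g y)) by rewrite !gK.
  by rewrite -(can_inj fK fx') -(can_inj fK fy').
- by exists x, y; split=> //; have := f_hom _ _ Egxy; rewrite !gK.
Qed.

Lemma no_descending_chain (C : digraph -> Prop) :
  ~ exists s : nat -> digraph, (forall i, C (s i)) /\
      forall i, shi_le (s i.+1) (s i) /\ ~ shi_le (s i) (s i.+1).
Proof.
move=> [s [_ desc]].
have size_lt i : dg_n (s i.+1) < dg_n (s i).
  have [le_i nle_i] := desc i; rewrite ltn_neqAle shi_le_card // andbT.
  by apply/eqP => eq_n; apply: nle_i; apply: shi_le_eq_card_sym.
have size_bound i : dg_n (s i) + i <= dg_n (s 0).
  by elim: i => [|i IH]; rewrite ?addn0 // addnS; apply: leq_trans IH; rewrite ltn_add2r.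
by have := size_bound (dg_n (s 0)).+1; lia.
Qed.

(* The complement of the directed path 0 -> 1 -> ... -> k+1. *)
Definition copath (loops : bool) (k : nat) : digraph :=
  @Digraph k.+2 (fun x y => (val y != (val x).+1) && (loops || (x != y))).

Lemma copath_hom_nonedge loops k (A : digraph) (f : vert (copath loops k) -> vert A) u v :
  is_hom f -> f u != f v -> ~~ dg_E (f u) (f v) -> val v = (val u).+1.
Proof.
move=> f_hom fu_neq_fv; apply: contraNeq => v_nsucc; apply: f_hom.
have u_neq_v : u != v by apply: contraNneq fu_neq_fv => ->.
by rewrite /= v_nsucc u_neq_v orbT.
Qed.

Lemma copath_succ_nonedge loops k (x y : vert (copath loops k)) :
  val y = (val x).+1 -> (x != y) && ~~ dg_E x y.
Proof.
move=> y_succ; rewrite /= y_succ eqxx /= andbT.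
by apply/eqP => /(congr1 val); rewrite y_succ => /n_Sn.
Qed.

Lemma copath_surj_hom_inj loops i j (f : vert (copath loops j) -> vert (copath loops i)) :
  is_hom f -> (forall a, exists b, f b = a) -> injective f.
Proof.
move=> f_hom f_surj x y fx_eq_fy.
have succ_of_pre u v : val (f v) = (val (f u)).+1 -> val v = (val u).+1.
  move=> fv_succ; have /andP[ne nE] := copath_succ_nonedge fv_succ.
  exact: (copath_hom_nonedge f_hom ne nE).
apply: val_inj; case: (ltnP (val (f x)).+1 i.+2) => [lt_succ | ge_succ].
- have [z fz] := f_surj (Ordinal lt_succ).
  have zx : val z = (val x).+1 by apply: succ_of_pre; rewrite fz.
  have zy : val z = (val y).+1 by apply: succ_of_pre; rewrite fz -fx_eq_fy.
  by apply: succn_inj; rewrite -zx -zy.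
- have fx_pos : 0 < val (f x) by move: ge_succ; rewrite ltnS; apply: leq_trans.
  have lt_pred : (val (f x)).-1 < i.+2 := leq_ltn_trans (leq_pred _) (ltn_ord _).
  have [z fz] := f_surj (Ordinal lt_pred).
  have xz : val x = (val z).+1 by apply: succ_of_pre; rewrite fz /= prednK.
  have yz : val y = (val z).+1 by apply: succ_of_pre; rewrite fz -fx_eq_fy /= prednK.
  by rewrite xz yz.
Qed.

Lemma copath_shi_le_eq loops i j : shi_le (copath loops i) (copath loops j) -> i = j.
Proof.
move=> [f [[f_hom _] f_surj]].
have := leq_card f (copath_surj_hom_inj f_hom f_surj).
have [g /can_inj g_inj] := surj_section f_surj.
have := leq_card g g_inj; rewrite !card_ord !ltnS.
by move=> le_ij le_ji; apply/eqP; rewrite eqn_leq le_ij.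
Qed.

Lemma Av_copath_loops (D : digraph) k :
  (dg_n D = 0 \/ exists a : vert D, ~~ dg_E a a) -> Av D (copath true k).
Proof.
move=> [D0 | [a Naa]] [f [[f_hom _] f_surj]].
- by case: (f ord0); rewrite D0.
- have [x fx] := f_surj a; move/negP: Naa; rewrite -fx; apply; apply: f_hom.
  by rewrite /= andbT neq_ltn ltnSn.
Qed.

Lemma Av_copath_loopless (D : digraph) k (u v : vert D) :
  (forall a : vert D, dg_E a a) -> ~~ dg_E u v -> Av D (copath false k).
Proof.
move=> D_refl Nuv [f [[f_hom f_strong] f_surj]].
have u_neq_v : u != v by apply: contraNneq Nuv => ->.
have [x fx] := f_surj u; have [q fq] := f_surj v.
have [x' [y' [fx' fy' Ex'y']]] : exists x' y', [/\ f x' = u, f y' = u & dg_E x' y'].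
  by rewrite -fx; apply: f_strong; rewrite fx.
have succ_of_pre z : f z = u -> val q = (val z).+1.
  by move=> fz; apply: (copath_hom_nonedge f_hom); rewrite fz fq.
move: Ex'y' => /andP[_ /=]; apply/negP/negPn/eqP/val_inj.
by apply: succn_inj; rewrite -!succ_of_pre.
Qed.

Lemma Av_antichain_of_not_complete (D : digraph) :
  ~ (0 < dg_n D /\ forall x y : vert D, dg_E x y) ->
  exists s : nat -> digraph, (forall i, Av D (s i)) /\
    forall i j, i <> j -> ~ shi_le (s i) (s j).
Proof.
move=> not_complete.
have [loops Av_copath] : exists loops, forall k, Av D (copath loops k).
  case: (posnP (dg_n D)) => [D0 | D_pos].
    by exists true => k; apply: Av_copath_loops; left.
  case: (boolP [forall a : vert D, dg_E a a]) => [/forallP D_refl | /forallPn[a Naa]].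
    case: (boolP [forall x : vert D, forall y, dg_E x y]) => [D_complete | ].
      by case: not_complete; split=> // x y; apply: (forallP (forallP D_complete x)).
    move=> /forallPn[u /forallPn[v Nuv]].
    by exists false => k; apply: Av_copath_loopless Nuv.
  by exists true => k; apply: Av_copath_loops; right; exists a.
by exists (copath loops); split=> // i j neq_ij /copath_shi_le_eq.
Qed.

Definition unbounded (P : nat -> Prop) := forall m, exists2 k, m <= k & P k.

Lemma ex_argmin (P : nat -> Prop) (f : nat -> nat) :
  (exists i, P i) -> exists i, P i /\ forall j, P j -> f i <= f j.
Proof.
move=> [i]; elim/(well_founded_ind (well_founded_ltof _ f)): i => i IH Pi.
case: (classic (exists j, P j /\ f j < f i)) => [[j [Pj lt_ji]] | no_smaller].
  by apply: (IH j) => //; apply/ltP.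
exists i; split=> // j Pj; rewrite leqNgt; apply/negP => lt_ji.
by apply: no_smaller; exists j.
Qed.

Lemma unbounded_monotone_refine (f : nat -> nat) (P : nat -> Prop) :
  unbounded P -> exists Q : nat -> Prop, [/\ forall k, Q k -> P k, unbounded Q &
    forall i j, Q i -> Q j -> i < j -> f i <= f j].
Proof.
move=> P_unb; exists (fun k => P k /\ forall l, k < l -> P l -> f k <= f l).
split=> [k [] // | m | i j [_ min_i] [Pj _] /min_i]; last exact.
have [k0 le_mk0 Pk0] := P_unb m.
have [k [[le_mk Pk] min_k]] :=
  @ex_argmin (fun k => m <= k /\ P k) f (ex_intro _ k0 (conj le_mk0 Pk0)).
exists k => //; split=> // l lt_kl Pl; apply: min_k; split=> //.
exact: leq_trans (ltnW lt_kl).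
Qed.

Lemma unbounded_monotone_refine_seq (T : eqType) (c : nat -> T -> nat) (s : seq T)
    (P : nat -> Prop) :
  unbounded P -> exists Q : nat -> Prop, [/\ forall k, Q k -> P k, unbounded Q &
    forall t, t \in s -> forall i j, Q i -> Q j -> i < j -> c i t <= c j t].
Proof.
elim: s => [|t s IH] P_unb; first by exists P.
have [Q1 [Q1P Q1_unb Q1_mono]] := IH P_unb.
have [Q2 [Q2Q1 Q2_unb Q2_mono]] := unbounded_monotone_refine (c^~ t) Q1_unb.
exists Q2; split=> [k /Q2Q1 /Q1P // | // | t'].
rewrite in_cons => /predU1P[-> | t's] i j Qi Qj lt_ij; first exact: Q2_mono.
exact: Q1_mono t's i j (Q2Q1 _ Qi) (Q2Q1 _ Qj) lt_ij.
Qed.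

Lemma dickson (T : finType) (c : nat -> T -> nat) :
  exists i j, i < j /\ forall t, c i t <= c j t.
Proof.
have [Q [_ Q_unb Q_mono]] :=
  unbounded_monotone_refine_seq c (enum T) (fun m => ex_intro2 _ _ m (leqnn m) I).
have [i _ Qi] := Q_unb 0; have [j lt_ij Qj] := Q_unb i.+1.
by exists i, j; split=> // t; apply: Q_mono; rewrite ?mem_enum.
Qed.

Lemma dickson_colored (C T : finType) (a : nat -> C) (c : nat -> T -> nat) :
  exists i j, [/\ i < j, a i = a j & forall t, c i t <= c j t].
Proof.
(* The colour d becomes the 0/1 coordinate [a i == d]. *)
pose c' i (x : T + C) := match x with inl t => c i t | inr d => nat_of_bool (a i == d) end.
have [i [j [lt_ij c'_le]]] := dickson c'.
exists i, j; split=> [// | | t]; last exact: (c'_le (inl t)).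
by have := c'_le (inr (a i)); rewrite /c' eqxx lt0b => /eqP.
Qed.

Definition vertex_cover (E : digraph) (cs : seq (vert E)) : bool :=
  [forall x, forall y, (x != y) && dg_E x y ==> (x \in cs) || (y \in cs)].

Section Matching.
Variable E : digraph.

Definition ends (M : seq (vert E * vert E)) : seq (vert E) := unzip1 M ++ unzip2 M.

Definition is_matching (M : seq (vert E * vert E)) : bool :=
  uniq (ends M) && all (fun e => dg_E e.1 e.2) M.

Lemma matching_or_cover n :
  (exists M, is_matching M /\ size M = n) \/
  (exists cs : seq (vert E), vertex_cover cs /\ size cs < n.*2).
Proof.
elim: n => [|n [[M [/andP[M_uniq M_edges] M_size]] | [cs [cs_cover cs_size]]]].
- by left; exists [::].
- case: (boolP (vertex_cover (ends M))) => [M_cover | /forallPn[x /forallPn[y]]].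
    right; exists (ends M); split=> //.
    by rewrite size_cat !size_map M_size addnn doubleS.
  rewrite negb_imply negb_or => /and3P[/andP[x_neq_y Exy] x_nin y_nin].
  left; exists ((x, y) :: M); split; last by rewrite /= M_size.
  have perm_ends : perm_eq (ends ((x, y) :: M)) (x :: y :: ends M).
    by rewrite /ends /= perm_cons -cat1s perm_catCA.
  rewrite /is_matching (perm_uniq perm_ends) /= Exy M_edges M_uniq in_cons negb_or.
  by rewrite x_neq_y x_nin y_nin.
- by right; exists cs; split=> //; rewrite doubleS ltnW // ltnW.
Qed.

End Matching.

Lemma complete_shi_le (D E : digraph) (f : vert E -> vert D) :
  (forall x y : vert D, dg_E x y) ->
  (forall i j, exists a b, [/\ f a = i, f b = j & dg_E a b]) -> shi_le D E.
Proof.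
move=> D_complete f_realizes; exists f; split; last first.
  by move=> i; have [a [_ [fa _ _]]] := f_realizes i i; exists a.
split=> [x y _ | x y _]; first exact: D_complete.
exact: f_realizes.
Qed.

Lemma matching_shi_le (D E : digraph) (M : seq (vert E * vert E)) :
  (forall x y : vert D, dg_E x y) -> 0 < dg_n D -> is_matching M ->
  dg_n D ^ 2 <= size M -> shi_le D E.
Proof.
move=> D_complete D_pos /andP[M_uniq M_edges] M_size.
set d := dg_n D in D_pos M_size.
have x0 : vert D := Ordinal D_pos.
have M_pos : 0 < size M by apply: leq_trans M_size; rewrite expn_gt0 D_pos.
have [p0 _] : exists p0 : vert E * vert E, true.
  by case: M M_pos {M_uniq M_edges M_size} => // p0; exists p0.
move: M_uniq; rewrite cat_uniq => /and3P[uniq1 disj uniq2].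
apply: (@complete_shi_le D E (fun v => insubd x0
  (if v \in unzip1 M then index v (unzip1 M) %/ d else index v (unzip2 M) %% d))) => // i j.
(* The e-th edge of M realizes the pair (i, j). *)
pose e := i * d + j; have e_lt : e < size M.
  by apply: leq_trans M_size; have := ltn_ord i; have := ltn_ord j; rewrite /e; nia.
pose p := nth p0 M e; exists p.1, p.2.
have p1_at : nth p0.1 (unzip1 M) e = p.1 by rewrite (nth_map p0).
have p2_at : nth p0.2 (unzip2 M) e = p.2 by rewrite (nth_map p0).
have p1_in : p.1 \in unzip1 M by rewrite -p1_at mem_nth ?size_map.
have p2_nin : p.2 \notin unzip1 M.
  by apply: contra disj => p2_in; apply/hasP; exists p.2; rewrite // -p2_at mem_nth ?size_map.
split.
- apply: ord_inj; rewrite /= p1_in -p1_at index_uniq ?size_map // val_insubd.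
  by rewrite divnMDl // divn_small // addn0 ltn_ord.
- apply: ord_inj; rewrite /= (negbTE p2_nin) -p2_at index_uniq ?size_map // val_insubd.
  by rewrite modnMDl modn_small // ltn_ord.
- exact: (all_nthP p0 M_edges).
Qed.

Lemma onth_index (T : eqType) (s : seq T) x : x \in s -> onth s (index x s) = Some x.
Proof. by move=> x_in; rewrite onthE (nth_map x) ?index_mem ?nth_index. Qed.

Lemma fibrewise_surjection (A B : finType) (X : eqType) (g : A -> X) (h : B -> X) :
  (forall x, #|[pred a | g a == x]| <= #|[pred b | h b == x]|) ->
  (forall b, exists a, g a == h b) ->
  exists2 f : B -> A, (forall b, g (f b) = h b) & (forall a, exists b, f b = a).
Proof.
move=> card_le fibre_inh.
(* The n-th element of a fibre of h goes to the n-th element of the fibre of g. *)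
pose fibA x := enum [pred a | g a == x]; pose fibB x := enum [pred b | h b == x].
exists (fun b => nth (xchoose (fibre_inh b)) (fibA (h b)) (index b (fibB (h b)))).
  move=> b; set i := index _ _; set a0 := xchoose _.
  case: (ltnP i (size (fibA (h b)))) => [i_lt | i_ge]; last first.
    by rewrite nth_default //; apply/eqP/(xchooseP (fibre_inh b)).
  by have := mem_nth a0 i_lt; rewrite mem_enum => /eqP.
move=> a; have a_in : a \in fibA (g a) by rewrite mem_enum inE.
have lt_fibB : index a (fibA (g a)) < size (fibB (g a)).
  by rewrite -cardE; apply: leq_trans (card_le (g a)); rewrite cardE index_mem.
have [b0 _] : exists b0 : B, true.
  by case: (fibB (g a)) lt_fibB => // b0; exists b0.
set b := nth b0 (fibB (g a)) (index a (fibA (g a))).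
have /eqP hb : b \in [pred b | h b == g a] by rewrite -mem_enum mem_nth.
by exists b; move: (xchoose _) => a0; rewrite hb index_uniq ?enum_uniq // nth_index.
Qed.

Section CoverProfile.
Variable K : nat.

(* Relative to a cover cs with at most K vertices, a vertex is placed either at
   its slot in cs or at its type: loop bit, out- and in-neighbours in cs. *)
Definition vtype := (bool * {ffun 'I_K -> bool} * {ffun 'I_K -> bool})%type.

Definition place := ('I_K + vtype)%type.

Section Places.
Variables (E : digraph) (cs : seq (vert E)).

Definition vertex_type (v : vert E) : vtype :=
  (dg_E v v, [ffun k : 'I_K => if onth cs k is Some u then dg_E v u else false],
   [ffun k : 'I_K => if onth cs k is Some u then dg_E u v else false]).

Definition place_of (v : vert E) : place :=
  if [pick k : 'I_K | onth cs k == Some v] is Some k then inl k else inr (vertex_type v).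

Definition cover_rel : {ffun 'I_K * 'I_K -> bool} :=
  [ffun p : 'I_K * 'I_K => if onth cs p.1 is Some x then
               if onth cs p.2 is Some y then dg_E x y else false
             else false].

Definition fibre_card (p : place) : nat := #|[pred v | place_of v == p]|.

Definition cover_profile := (cover_rel, [ffun p => 0 < fibre_card p]).

Variant place_spec (v : vert E) : place -> Type :=
  | PlaceIn (k : 'I_K) of onth cs k = Some v : place_spec v (inl k)
  | PlaceOut of v \notin cs : place_spec v (inr (vertex_type v)).

Lemma place_ofP v : size cs <= K -> place_spec v (place_of v).
Proof.
rewrite /place_of => cs_size; case: pickP => [k /eqP | no_slot]; first exact: PlaceIn.
apply: PlaceOut; apply/negP => v_in.
have index_lt : index v cs < K by apply: leq_trans cs_size; rewrite index_mem.
by have := no_slot (Ordinal index_lt); rewrite /= onth_index // eqxx.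
Qed.

End Places.

(* Outside a vertex cover only loops remain, hence the flag [same] for [x == y]. *)
Definition place_edge (cr : {ffun 'I_K * 'I_K -> bool}) (p q : place) (same : bool) :=
  match p, q with
  | inl k, inl l => cr (k, l)
  | inl k, inr (_, _, inn) => inn k
  | inr (_, out, _), inl l => out l
  | inr (loop, _, _), inr _ => same && loop
  end.

Lemma place_edge_weaken cr p q same : place_edge cr p q false -> place_edge cr p q same.
Proof. by case: p q => [k | [[? ?] ?]] [l | [[? ?] ?]]. Qed.

Lemma edge_place (E : digraph) (cs : seq (vert E)) (x y : vert E) :
  size cs <= K -> vertex_cover cs ->
  dg_E x y = place_edge (cover_rel cs) (place_of cs x) (place_of cs y) (x == y).
Proof.
move=> cs_size cs_cover.
case: (place_ofP x cs_size) => [k xk | x_out]; case: (place_ofP y cs_size) => [l yl | y_out];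
  rewrite /= ?ffunE /= ?xk ?yl //.
case: eqP => [<- // | /eqP x_neq_y]; apply/negbTE/negP => Exy.
by have := forallP (forallP cs_cover x) y; rewrite x_neq_y Exy (negbTE x_out) (negbTE y_out).
Qed.

Lemma place_preserving_strong_hom (E E' : digraph) (cs : seq (vert E))
    (cs' : seq (vert E')) (f : vert E' -> vert E) :
  size cs <= K -> vertex_cover cs -> size cs' <= K -> vertex_cover cs' ->
  cover_rel cs = cover_rel cs' -> (forall w, place_of cs (f w) = place_of cs' w) ->
  is_strong_hom f.
Proof.
move=> cs_size cs_cover cs'_size cs'_cover rel_eq f_place.
have edgeE w1 w2 b : place_edge (cover_rel cs) (place_of cs (f w1)) (place_of cs (f w2)) b =
    place_edge (cover_rel cs') (place_of cs' w1) (place_of cs' w2) b.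
  by rewrite rel_eq !f_place.
have edge' w1 w2 := edge_place w1 w2 cs'_size cs'_cover.
split=> [w1 w2 | w1 w2].
- rewrite edge' (edge_place _ _ cs_size cs_cover) edgeE.
  by case: (eqVneq w1 w2) => [-> | _]; rewrite ?eqxx //; apply: place_edge_weaken.
- rewrite (edge_place _ _ cs_size cs_cover) edgeE.
  case: (eqVneq (f w1) (f w2)) => [fw_eq | fw_neq] Efw.
    exists w1, w1; split=> //.
    by rewrite edge' eqxx; move: Efw; rewrite -edgeE -fw_eq edgeE.
  by exists w1, w2; split=> //; rewrite edge'; apply: place_edge_weaken.
Qed.

Lemma shi_le_of_profile (E E' : digraph) (cs : seq (vert E)) (cs' : seq (vert E')) :
  size cs <= K -> vertex_cover cs -> size cs' <= K -> vertex_cover cs' ->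
  cover_profile cs = cover_profile cs' ->
  (forall p, fibre_card cs p <= fibre_card cs' p) -> shi_le E E'.
Proof.
move=> cs_size cs_cover cs'_size cs'_cover profile_eq card_le.
case: profile_eq => rel_eq /ffunP supp_eq.
have place_inh w : exists v, place_of cs v == place_of cs' w.
  have /card_gt0P[v /eqP v_place] : 0 < fibre_card cs (place_of cs' w).
    have := supp_eq (place_of cs' w); rewrite !ffunE => ->.
    by apply/card_gt0P; exists w; rewrite inE.
  by exists v; rewrite v_place.
have [f f_place f_surj] := fibrewise_surjection card_le place_inh.
exists f; split=> //.
exact: place_preserving_strong_hom cs_size cs_cover cs'_size cs'_cover rel_eq f_place.
Qed.

End CoverProfile.

Lemma Av_complete_cover (D E : digraph) :
  (forall x y : vert D, dg_E x y) -> 0 < dg_n D -> Av D E ->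
  exists cs : seq (vert E), vertex_cover cs && (size cs <= (dg_n D ^ 2).*2).
Proof.
move=> D_complete D_pos E_Av.
case: (matching_or_cover E (dg_n D ^ 2)) => [[M [M_matching M_size]] | [cs [cover small]]].
  by case: E_Av; apply: (matching_shi_le D_complete D_pos M_matching); rewrite M_size.
by exists cs; rewrite cover ltnW.
Qed.

Lemma Av_complete_no_antichain (D : digraph) :
  (forall x y : vert D, dg_E x y) -> 0 < dg_n D ->
  ~ exists s : nat -> digraph, (forall i, Av D (s i)) /\
      forall i j, i <> j -> ~ shi_le (s i) (s j).
Proof.
move=> D_complete D_pos [s [s_Av s_antichain]].
pose K := (dg_n D ^ 2).*2.
have cover_ex i : exists cs : seq (vert (s i)), vertex_cover cs && (size cs <= K).
  exact: Av_complete_cover.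
pose cs i := xchoose (cover_ex i).
have cs_spec i := xchooseP (cover_ex i).
have [i [j [lt_ij profile_eq card_le]]] := dickson_colored
  (fun i => cover_profile K (cs i)) (fun i (p : place K) => fibre_card (cs i) p).
apply: (s_antichain i j); first by move=> eq_ij; rewrite eq_ij ltnn in lt_ij.
have /andP[cover_i size_i] := cs_spec i; have /andP[cover_j size_j] := cs_spec j.
exact: shi_le_of_profile size_i cover_i size_j cover_j profile_eq card_le.
Qed.

Theorem theorem4p3 (D : digraph) :
  wqo_class (Av D) <-> exists n : nat, 1 <= n /\ dg_iso D (complete_digraph n).
Proof.
split=> [[_ no_antichain] | [n [n_pos [phi [phi_bij phi_edge]]]]].
- case: (classic (0 < dg_n D /\ forall x y : vert D, dg_E x y))
    => [[D_pos D_complete] | not_complete].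
    exists (dg_n D); split=> //; exists id; split; first by exists id.
    by move=> x y; rewrite D_complete.
  by case: no_antichain; apply: Av_antichain_of_not_complete.
- have D_complete (x y : vert D) : dg_E x y by rewrite phi_edge.
  have D_pos : 0 < dg_n D by have := bij_eq_card phi_bij; rewrite !card_ord => ->.
  by split; [apply: no_descending_chain | apply: Av_complete_no_antichain].
Qed.
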